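(* Let $n\ge4$, $r_1,r_2\in\mathbb{Z}_+$ with $r_1+r_2=n-1$, and let $-1<\alpha_1<1$, $0\le\alpha_2,\alpha_3<1$ with $\alpha_1+\alpha_2+\alpha_3=1$ and $r_1+\alpha_1\ge r_2+\alpha_2$. Then $$\mathfrak{L}_n(r_1,r_2,0,\alpha_1,\alpha_2,\alpha_3)\le \mathfrak{L}_n(r_1+r_2,0,0,\alpha_1,\alpha_2,\alpha_3)+2^{r_2+2}+1-r_2+2^{r_2+1}\ln n.$$
   Context: Points of a triangle are identified with barycentric coordinates $\lambda=(\lambda_1,\lambda_2,\lambda_3)$, $\lambda_r\ge0$, $\sum\lambda_r=1$. For an integer $n\ge1$ let $I=\{i=(i_1,i_2,i_3)\in\mathbb{Z}_+^3: i_1+i_2+i_3=n\}$, and let $l_i(\lambda)=\prod_{s=1}^{3}\frac{1}{i_s!}\prod_{t=0}^{i_s-1}(n\lambda_s-t)$ (the Lagrange fundamental polynomials for the equally spaced nodes $i/n$, $i\in I$). The Lebesgue function is $\mathcal{L}_n(\lambda)=\sum_{i\in I}|l_i(\lambda)|$. For $r_s\in\mathbb{Z}_+$ with $r_1+r_2+r_3=n-1$ and reals $\alpha_s$ with $\alpha_1+\alpha_2+\alpha_3=1$, write $\mathfrak{L}_n(r_1,r_2,r_3,\alpha_1,\alpha_2,\alpha_3)=\mathcal{L}_n(\lambda)$ where $\lambda_s=(r_s+\alpha_s)/n$, $s=1,2,3$. *)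

From Stdlib Require Import Reals Factorial.
Open Scope R_scope.

Fixpoint fall (y : R) (k : nat) : R :=
  match k with
  | O => 1
  | S k' => fall y k' * (y - INR k')
  end.

Definition lfac (n : nat) (lam : R) (k : nat) : R :=
  fall (INR n * lam) k / INR (fact k).

Definition lagr (n i1 i2 i3 : nat) (l1 l2 l3 : R) : R :=
  lfac n l1 i1 * lfac n l2 i2 * lfac n l3 i3.

Fixpoint sumto (m : nat) (f : nat -> R) : R :=
  match m with
  | O => f O
  | S m' => sumto m' f + f m
  end.

Definition lebesgue (n : nat) (l1 l2 l3 : R) : R :=
  sumto n (fun i1 => sumto (n - i1) (fun i2 =>
    Rabs (lagr n i1 i2 (n - i1 - i2) l1 l2 l3)))%nat.

Definition frakL (n r1 r2 r3 : nat) (a1 a2 a3 : R) : R :=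
  lebesgue n ((INR r1 + a1) / INR n) ((INR r2 + a2) / INR n)
             ((INR r3 + a3) / INR n).

From Stdlib Require Import Reals Lra Lia Psatz Arith.
Open Scope R_scope.

(** By [lfac n lam k = binom(n lam, k)], the Lebesgue function at [lambda] is the
    triple Cauchy product [(|binom(y1,.)| * |binom(y2,.)| * |binom(y3,.)|)(n)] with
    [y_s = n lambda_s].  Vandermonde's identity
    [binom(r2 + a2, .) = binom(r2, .) * binom(a2, .)] and associativity move the
    integer part [r2] from the second coordinate onto the first, where
    [binom(r2, .) * |binom(y, .)|] is compared with [|binom(y + r2, .)|],
    [y = r1 + a1 = p + phi].  The coefficients [binom(y, j)] are nonnegative for
    [j <= p + 1] and at most [1/(p + 2)] in absolute value beyond, so the only loss
    is [2^(r2+1)/(p + 2)] at each of the [n - p - 1] indices [k >= p + 2], weighted by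
    [sum_k |binom(a3, k)| <= 2 + ln n] (as [|binom(a, k)| <= 1/k]). *)

Lemma sumto_ext m f g :
  (forall i, (i <= m)%nat -> f i = g i) -> sumto m f = sumto m g.
Proof.
  induction m; intros H; simpl.
  - apply H; lia.
  - rewrite IHm by (intros; apply H; lia). rewrite H by lia. reflexivity.
Qed.

Lemma sumto_le m f g :
  (forall i, (i <= m)%nat -> f i <= g i) -> sumto m f <= sumto m g.
Proof.
  induction m; intros H; simpl.
  - apply H; lia.
  - apply Rplus_le_compat; [apply IHm; intros i Hi|]; apply H; lia.
Qed.

Lemma sumto_nonneg m f : (forall i, (i <= m)%nat -> 0 <= f i) -> 0 <= sumto m f.
Proof.
  induction m; intros H; simpl.
  - apply H; lia.
  - apply Rplus_le_le_0_compat; [apply IHm; intros i Hi|]; apply H; lia.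
Qed.

Lemma sumto_le_upper m m' f :
  (forall i, 0 <= f i) -> (m <= m')%nat -> sumto m f <= sumto m' f.
Proof.
  intros Hf Hm; induction Hm as [|m' _ IH]; simpl; [lra|].
  specialize (Hf (S m')); lra.
Qed.

Lemma sumto_plus m f g : sumto m (fun i => f i + g i) = sumto m f + sumto m g.
Proof. induction m; simpl; [|rewrite IHm]; ring. Qed.

Lemma sumto_scal_l m c f : sumto m (fun i => c * f i) = c * sumto m f.
Proof. induction m; simpl; [|rewrite IHm]; ring. Qed.

Lemma sumto_abs m f : Rabs (sumto m f) <= sumto m (fun i => Rabs (f i)).
Proof.
  induction m; simpl; [lra|].
  eapply Rle_trans; [apply Rabs_triang | lra].
Qed.

Lemma sumto_S_l m f : sumto (S m) f = f O + sumto m (fun i => f (S i)).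
Proof.
  induction m; [reflexivity|].
  change (sumto (S (S m)) f) with (sumto (S m) f + f (S (S m))).
  rewrite IHm; simpl; ring.
Qed.

Lemma sumto_delta m f : (forall i, f (S i) = 0) -> sumto m f = f O.
Proof. intros H; induction m; simpl; [|rewrite IHm, H]; ring. Qed.

Lemma sumto_rev m f : sumto m f = sumto m (fun i => f (m - i)%nat).
Proof.
  induction m; [reflexivity|].
  rewrite (sumto_S_l m (fun i => f (S m - i)%nat)), Nat.sub_0_r.
  simpl; rewrite IHm; ring.
Qed.

Lemma sumto_triangle m F :
  sumto m (fun k => sumto k (fun i => F i k)) =
  sumto m (fun i => sumto (m - i) (fun j => F i (i + j)%nat)).
Proof.
  induction m; [reflexivity|].
  change (sumto (S m) (fun k => sumto k (fun i => F i k)))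
    with (sumto m (fun k => sumto k (fun i => F i k)) + sumto (S m) (fun i => F i (S m))).
  rewrite IHm.
  change (sumto (S m) (fun i => sumto (S m - i) (fun j => F i (i + j)%nat)))
    with (sumto m (fun i => sumto (S m - i) (fun j => F i (i + j)%nat))
          + sumto (S m - S m) (fun j => F (S m) (S m + j)%nat)).
  rewrite Nat.sub_diag; cbn [sumto]; rewrite Nat.add_0_r.
  rewrite (sumto_ext m (fun i => sumto (S m - i) _)
             (fun i => sumto (m - i) (fun j => F i (i + j)%nat) + F i (S m))).
  - rewrite sumto_plus; simpl; ring.
  - intros i Hi; replace (S m - i)%nat with (S (m - i)) by lia; simpl.
    do 2 f_equal; lia.
Qed.

Definition conv (u v : nat -> R) (m : nat) : R :=
  sumto m (fun i => u i * v (m - i)%nat).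

Lemma conv_ext u u' v v' m :
  (forall i, (i <= m)%nat -> u i = u' i) -> (forall i, (i <= m)%nat -> v i = v' i) ->
  conv u v m = conv u' v' m.
Proof.
  intros Hu Hv; apply sumto_ext; intros i Hi.
  rewrite Hu, Hv by lia; reflexivity.
Qed.

Lemma conv_le u u' v v' m :
  (forall i, (i <= m)%nat -> 0 <= u i <= u' i) ->
  (forall i, (i <= m)%nat -> 0 <= v i <= v' i) ->
  conv u v m <= conv u' v' m.
Proof.
  intros Hu Hv; apply sumto_le; intros i Hi.
  destruct (Hu i Hi), (Hv (m - i)%nat ltac:(lia)).
  apply Rmult_le_compat; lra.
Qed.

Lemma conv_nonneg u v m : (forall i, 0 <= u i) -> (forall i, 0 <= v i) -> 0 <= conv u v m.
Proof. intros; apply sumto_nonneg; intros; apply Rmult_le_pos; auto. Qed.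

Lemma conv_plus_l u u' v m :
  conv (fun i => u i + u' i) v m = conv u v m + conv u' v m.
Proof. unfold conv; rewrite <- sumto_plus; apply sumto_ext; intros; ring. Qed.

Lemma conv_comm u v m : conv u v m = conv v u m.
Proof.
  unfold conv; rewrite sumto_rev; apply sumto_ext; intros i Hi.
  rewrite Nat.sub_sub_distr, Nat.sub_diag by lia; simpl; ring.
Qed.

Lemma conv_assoc u v w m : conv u (conv v w) m = conv (conv u v) w m.
Proof.
  unfold conv.
  transitivity (sumto m (fun k => sumto k (fun i => u i * v (k - i)%nat * w (m - k)%nat))).
  - rewrite sumto_triangle; apply sumto_ext; intros i Hi.
    rewrite <- sumto_scal_l; apply sumto_ext; intros j Hj.
    replace (i + j - i)%nat with j by lia; rewrite Nat.sub_add_distr; ring.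
  - apply sumto_ext; intros k Hk.
    rewrite Rmult_comm, <- sumto_scal_l; apply sumto_ext; intros; ring.
Qed.

Lemma conv_delta_l u v m : (forall i, u (S i) = 0) -> conv u v m = u O * v m.
Proof.
  intros Hu; unfold conv; rewrite sumto_delta, Nat.sub_0_r; [reflexivity|].
  intros i; rewrite Hu; ring.
Qed.

(** Multiplication of the generating function by [X]. *)
Definition shift (u : nat -> R) (k : nat) : R :=
  match k with O => 0 | S k' => u k' end.

Lemma conv_shift_l u v m : conv (shift u) v m = shift (conv u v) m.
Proof.
  unfold conv; destruct m as [|m]; [cbn; ring|].
  rewrite sumto_S_l; cbn [shift]; rewrite Rmult_0_l, Rplus_0_l; reflexivity.
Qed.

Lemma conv_le_sum_mul u v M m :
  (forall i, (i <= m)%nat -> 0 <= u i) -> (forall i, (i <= m)%nat -> v i <= M) ->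
  conv u v m <= sumto m u * M.
Proof.
  intros Hu Hv; rewrite Rmult_comm, <- sumto_scal_l.
  apply sumto_le; intros i Hi.
  rewrite (Rmult_comm M); apply Rmult_le_compat_l; [apply Hu | apply Hv]; lia.
Qed.

Definition gbinom (x : R) (k : nat) : R := fall x k / INR (fact k).

Definition abinom (x : R) (k : nat) : R := Rabs (gbinom x k).

Lemma INR_fact_pos k : 0 < INR (fact k).
Proof. apply lt_0_INR, lt_O_fact. Qed.

Lemma INR_fact_S k : INR (fact (S k)) = (INR k + 1) * INR (fact k).
Proof. change (fact (S k)) with (S k * fact k)%nat; rewrite mult_INR, S_INR; reflexivity. Qed.

Lemma gbinom_0 x : gbinom x 0 = 1.
Proof. unfold gbinom; simpl; field. Qed.

Lemma gbinom_S x k : gbinom x (S k) = gbinom x k * (x - INR k) / (INR k + 1).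
Proof.
  unfold gbinom; simpl fall; rewrite INR_fact_S.
  pose proof (INR_fact_pos k); pose proof (pos_INR k); field; lra.
Qed.

Lemma fall_add_1 x k : fall (x + 1) (S k) = (x + 1) * fall x k.
Proof.
  induction k as [|k IHk]; [simpl; ring|].
  change (fall (x + 1) (S (S k))) with (fall (x + 1) (S k) * (x + 1 - INR (S k))).
  rewrite IHk, S_INR; simpl; ring.
Qed.

Lemma fall_INR_diag m : fall (INR m) m = INR (fact m).
Proof. induction m; [reflexivity|]. rewrite S_INR, fall_add_1, IHm, INR_fact_S; reflexivity. Qed.

Lemma fall_INR_lt q k : (q < k)%nat -> fall (INR q) k = 0.
Proof.
  induction k; intros H; [lia|]; simpl.
  destruct (Nat.eq_dec q k) as [->|]; [ring|].
  rewrite IHk by lia; ring.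
Qed.

Lemma gbinom_INR_nonneg q k : 0 <= gbinom (INR q) k.
Proof.
  unfold gbinom, Rdiv; apply Rmult_le_pos; [|left; apply Rinv_0_lt_compat, INR_fact_pos].
  induction k; simpl; [lra|].
  destruct (le_lt_dec k q) as [Hk|Hk].
  - apply Rmult_le_pos; [assumption|]. apply le_INR in Hk; lra.
  - rewrite fall_INR_lt by lia; lra.
Qed.

Lemma gbinom_0_S k : gbinom 0 (S k) = 0.
Proof. unfold gbinom; change 0 with (INR 0) at 1; rewrite fall_INR_lt by lia; unfold Rdiv; ring. Qed.

Lemma gbinom_pascal x k : gbinom (x + 1) k = gbinom x k + shift (gbinom x) k.
Proof.
  destruct k as [|k]; simpl shift; [rewrite !gbinom_0; ring|].
  unfold gbinom; rewrite fall_add_1; simpl fall; rewrite INR_fact_S.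
  pose proof (INR_fact_pos k); pose proof (pos_INR k); field; lra.
Qed.

Lemma gbinom_vandermonde q x m :
  gbinom (INR q + x) m = conv (gbinom (INR q)) (gbinom x) m.
Proof.
  revert m; induction q as [|q IHq]; intros m.
  - rewrite conv_delta_l by apply gbinom_0_S.
    simpl INR; rewrite gbinom_0, Rplus_0_l; ring.
  - rewrite S_INR, (conv_ext _ (fun i => gbinom (INR q) i + shift (gbinom (INR q)) i)
                     _ (gbinom x)) by (intros; first [apply gbinom_pascal | reflexivity]).
    replace (INR q + 1 + x) with (INR q + x + 1) by ring.
    rewrite gbinom_pascal, conv_plus_l, conv_shift_l, IHq.
    destruct m; simpl; [reflexivity | rewrite IHq; reflexivity].
Qed.

Lemma abinom_INR_add_le q x k :
  abinom (INR q + x) k <= conv (gbinom (INR q)) (abinom x) k.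
Proof.
  unfold abinom; rewrite gbinom_vandermonde.
  eapply Rle_trans; [apply sumto_abs|]; apply sumto_le; intros i Hi.
  rewrite Rabs_mult, Rabs_pos_eq by apply gbinom_INR_nonneg; lra.
Qed.

Lemma sumto_gbinom_INR_le q k : sumto k (gbinom (INR q)) <= 2 ^ q.
Proof.
  revert k; induction q as [|q IHq]; intros k.
  - rewrite sumto_delta by apply gbinom_0_S. simpl INR; rewrite gbinom_0; simpl; lra.
  - rewrite (sumto_ext k _ (fun i => gbinom (INR q) i + shift (gbinom (INR q)) i))
      by (intros; rewrite S_INR; apply gbinom_pascal).
    rewrite sumto_plus; simpl pow.
    enough (sumto k (shift (gbinom (INR q))) <= 2 ^ q) by (specialize (IHq k); lra).
    destruct k as [|k].
    + cbn; pose proof (pow_le 2 q); lra.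
    + rewrite sumto_S_l; cbn [shift]; rewrite Rplus_0_l; apply IHq.
Qed.

Lemma abinom_le_inv a i : 0 <= a < 1 -> (1 <= i)%nat -> abinom a i <= / INR i.
Proof.
  intros Ha Hi; induction Hi as [|m Hm IH].
  - unfold abinom; rewrite gbinom_S, gbinom_0; simpl INR.
    rewrite Rinv_1, Rabs_pos_eq by lra; lra.
  - unfold abinom in *; rewrite gbinom_S.
    assert (Hm1 : 1 <= INR m) by (apply le_INR in Hm; simpl in Hm; lra).
    unfold Rdiv; rewrite !Rabs_mult, Rabs_inv, (Rabs_pos_eq (INR m + 1)), (Rabs_left1 (a - INR m)),
      S_INR by lra.
    replace (- (a - INR m)) with (INR m - a) by ring.
    apply Rle_trans with (/ INR m * (INR m - a) * / (INR m + 1)).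
    + apply Rmult_le_compat_r; [left; apply Rinv_0_lt_compat; lra|].
      apply Rmult_le_compat_r; lra.
    + rewrite <- (Rmult_1_l (/ (INR m + 1))) at 2.
      apply Rmult_le_compat_r; [left; apply Rinv_0_lt_compat; lra|].
      apply Rmult_le_reg_l with (INR m); [lra|].
      rewrite <- Rmult_assoc, Rinv_r, Rmult_1_l by lra; lra.
Qed.

Lemma abinom_le_1 a i : 0 <= a < 1 -> abinom a i <= 1.
Proof.
  intros Ha; destruct i as [|i].
  - unfold abinom; rewrite gbinom_0, Rabs_R1; lra.
  - eapply Rle_trans; [apply abinom_le_inv; [assumption | lia]|].
    rewrite <- Rinv_1; apply Rinv_le_contravar; [lra|].
    rewrite S_INR; pose proof (pos_INR i); lra.
Qed.

Lemma inv_le_ln_diff t : 0 < t -> / (t + 1) <= ln (t + 1) - ln t.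
Proof.
  intros Ht; pose proof (exp_ineq1_le (ln t - ln (t + 1))) as H.
  unfold Rminus in H; rewrite exp_plus, exp_Ropp, !exp_ln in H by lra.
  replace (t * / (t + 1)) with (1 - / (t + 1)) in H by (field; lra); lra.
Qed.

Lemma sumto_abinom_le_ln a n :
  0 <= a < 1 -> (1 <= n)%nat -> sumto n (abinom a) <= 2 + ln (INR n).
Proof.
  intros Ha Hn; induction Hn as [|n Hn IH].
  - simpl; rewrite ln_1; unfold abinom at 1; rewrite gbinom_0, Rabs_R1.
    pose proof (abinom_le_1 a 1 Ha); lra.
  - simpl sumto; pose proof (abinom_le_inv a (S n) Ha ltac:(lia)) as Hs.
    assert (Hn0 : 0 < INR n) by (apply lt_0_INR; lia).
    pose proof (inv_le_ln_diff (INR n) Hn0); rewrite S_INR in *; lra.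
Qed.

Definition indic_ge (m k : nat) : R := if (m <=? k)%nat then 1 else 0.

Lemma indic_ge_bounds m k : 0 <= indic_ge m k <= 1.
Proof. unfold indic_ge; destruct (m <=? k)%nat; lra. Qed.

Lemma indic_ge_le m j k : (j <= k)%nat -> indic_ge m j <= indic_ge m k.
Proof.
  intros Hjk; unfold indic_ge.
  destruct (m <=? j)%nat eqn:Ej, (m <=? k)%nat eqn:Ek; try lra.
  apply Nat.leb_le in Ej; apply Nat.leb_gt in Ek; lia.
Qed.

Lemma sumto_indic_ge n m : sumto n (indic_ge m) = INR (S n - m).
Proof.
  induction n as [|n IH]; simpl sumto; unfold indic_ge in *.
  - destruct m as [|[|m]]; reflexivity.
  - rewrite IH; destruct (m <=? S n)%nat eqn:E.
    + apply Nat.leb_le in E; replace (S (S n) - m)%nat with (S (S n - m)) by lia.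
      rewrite S_INR; ring.
    + apply Nat.leb_gt in E; replace (S (S n) - m)%nat with (S n - m)%nat by lia; ring.
Qed.

Section IntegerPart.

Variables (p : nat) (phi : R).
Hypothesis Hphi : 0 <= phi < 1.

Lemma fall_intpart_nonneg i : (i <= S p)%nat -> 0 <= fall (INR p + phi) i.
Proof.
  induction i as [|i IH]; intros Hi; simpl; [lra|].
  apply Rmult_le_pos; [apply IH; lia|].
  assert (INR i <= INR p) by (apply le_INR; lia); lra.
Qed.

Lemma fall_intpart_le i : (i <= S p)%nat -> fall (INR p + phi) i <= fall (INR (S p)) i.
Proof.
  rewrite S_INR; induction i as [|i IH]; intros Hi; simpl fall; [lra|].
  assert (INR i <= INR p) by (apply le_INR; lia).
  apply Rmult_le_compat; [apply fall_intpart_nonneg; lia | lra | apply IH; lia | lra].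
Qed.

Lemma gbinom_intpart_nonneg i : (i <= S p)%nat -> 0 <= gbinom (INR p + phi) i.
Proof.
  intros Hi; unfold gbinom, Rdiv; apply Rmult_le_pos; [apply fall_intpart_nonneg; auto|].
  left; apply Rinv_0_lt_compat, INR_fact_pos.
Qed.

Lemma gbinom_intpart_le_1 : gbinom (INR p + phi) (S p) <= 1.
Proof.
  unfold gbinom; pose proof (fall_intpart_le (S p) (le_n _)) as H.
  rewrite fall_INR_diag in H; pose proof (INR_fact_pos (S p)).
  apply Rmult_le_reg_r with (INR (fact (S p))); [assumption|].
  unfold Rdiv; rewrite Rmult_assoc, Rinv_l by lra; lra.
Qed.

Lemma abinom_intpart_tail d : abinom (INR p + phi) (S (S p) + d) <= / (INR p + 2).
Proof.
  pose proof (pos_INR p) as Hp; unfold abinom.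
  induction d as [|d IH].
  - rewrite Nat.add_0_r, gbinom_S, S_INR.
    pose proof (gbinom_intpart_nonneg (S p) (le_n _)); pose proof gbinom_intpart_le_1.
    replace (gbinom (INR p + phi) (S p) * (INR p + phi - (INR p + 1)) / (INR p + 1 + 1))
      with (gbinom (INR p + phi) (S p) * (phi - 1) * / (INR p + 2)) by (field; lra).
    rewrite Rabs_mult, (Rabs_pos_eq (/ (INR p + 2))) by (left; apply Rinv_0_lt_compat; lra).
    rewrite <- (Rmult_1_l (/ (INR p + 2))) at 2.
    apply Rmult_le_compat_r; [left; apply Rinv_0_lt_compat; lra|].
    rewrite Rabs_mult, Rabs_pos_eq, Rabs_left1 by lra; nra.
  - rewrite Nat.add_succ_r, gbinom_S.
    set (m := (S (S p) + d)%nat) in *.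
    assert (Hm : INR p + 2 <= INR m).
    { replace (INR p + 2) with (INR (S (S p))) by (rewrite !S_INR; ring).
      apply le_INR; unfold m; lia. }
    unfold Rdiv; rewrite !Rabs_mult, Rabs_inv, (Rabs_pos_eq (INR m + 1)) by lra.
    rewrite <- (Rmult_1_r (/ (INR p + 2))), Rmult_assoc.
    apply Rmult_le_compat; [apply Rabs_pos | | assumption |].
    + apply Rmult_le_pos; [apply Rabs_pos | left; apply Rinv_0_lt_compat; lra].
    + apply Rmult_le_reg_r with (INR m + 1); [lra|].
      rewrite Rmult_assoc, Rinv_l, Rmult_1_r, Rmult_1_l by lra.
      apply Rabs_le; lra.
Qed.

Lemma gbinom_intpart_neg_le j :
  - gbinom (INR p + phi) j <= indic_ge (S (S p)) j / (INR p + 2).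
Proof.
  pose proof (pos_INR p) as Hp; unfold indic_ge; destruct (S (S p) <=? j)%nat eqn:E.
  - apply Nat.leb_le in E.
    pose proof (abinom_intpart_tail (j - S (S p))) as H.
    rewrite Nat.add_comm, Nat.sub_add in H by assumption; unfold abinom in H.
    pose proof (Rle_abs (- gbinom (INR p + phi) j)); rewrite Rabs_Ropp in *; lra.
  - apply Nat.leb_gt in E; pose proof (gbinom_intpart_nonneg j ltac:(lia)).
    unfold Rdiv; lra.
Qed.

End IntegerPart.

Lemma Rabs_le_add_twice x g : - x <= g -> 0 <= g -> Rabs x <= x + 2 * g.
Proof. intros; unfold Rabs; destruct (Rcase_abs x); lra. Qed.

Lemma conv_gbinom_abinom_intpart_le q p phi k :
  0 <= phi < 1 ->
  conv (gbinom (INR q)) (abinom (INR p + phi)) k <=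
  abinom (INR q + (INR p + phi)) k + 2 * 2 ^ q / (INR p + 2) * indic_ge (S (S p)) k.
Proof.
  intros Hphi; pose proof (pos_INR p) as Hp.
  assert (Hp2 : 0 < / (INR p + 2)) by (apply Rinv_0_lt_compat; lra).
  apply Rle_trans with (sumto k (fun l => gbinom (INR q) l * gbinom (INR p + phi) (k - l)%nat
      + 2 * (gbinom (INR q) l * (indic_ge (S (S p)) k / (INR p + 2))))).
  - apply sumto_le; intros l Hl; pose proof (gbinom_INR_nonneg q l).
    unfold abinom; rewrite <- (Rabs_pos_eq (gbinom (INR q) l)) at 1 by assumption.
    rewrite <- Rabs_mult; apply Rabs_le_add_twice.
    + rewrite Ropp_mult_distr_r; apply Rmult_le_compat_l; [assumption|].
      eapply Rle_trans; [apply (gbinom_intpart_neg_le p phi Hphi (k - l))|].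
      apply Rmult_le_compat_r; [lra | apply indic_ge_le; lia].
    + pose proof (indic_ge_bounds (S (S p)) k); unfold Rdiv; apply Rmult_le_pos; nra.
  - rewrite sumto_plus, sumto_scal_l.
    rewrite (sumto_ext k (fun l => gbinom (INR q) l * (indic_ge (S (S p)) k / (INR p + 2)))
                         (fun l => indic_ge (S (S p)) k / (INR p + 2) * gbinom (INR q) l))
      by (intros; ring).
    fold (conv (gbinom (INR q)) (gbinom (INR p + phi)) k).
    rewrite sumto_scal_l, <- gbinom_vandermonde.
    pose proof (sumto_gbinom_INR_le q k); pose proof (indic_ge_bounds (S (S p)) k).
    apply Rplus_le_compat; [apply Rle_abs|].
    replace (2 * 2 ^ q / (INR p + 2) * indic_ge (S (S p)) k)
      with (2 * (indic_ge (S (S p)) k / (INR p + 2) * 2 ^ q)) by (unfold Rdiv; ring).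
    apply Rmult_le_compat_l; [lra|]; apply Rmult_le_compat_l; [unfold Rdiv; nra | assumption].
Qed.

Lemma abinom_nonneg x k : 0 <= abinom x k.
Proof. apply Rabs_pos. Qed.

Lemma conv_abinom_le_sumto a b j n :
  0 <= a < 1 -> (j <= n)%nat -> conv (abinom a) (abinom b) j <= sumto n (abinom b).
Proof.
  intros Ha Hj; rewrite conv_comm.
  eapply Rle_trans; [apply (conv_le_sum_mul _ _ 1) | rewrite Rmult_1_r].
  - intros; apply abinom_nonneg.
  - intros; apply abinom_le_1, Ha.
  - apply sumto_le_upper; [apply abinom_nonneg | assumption].
Qed.

Lemma conv3_abinom_transfer_le n q p phi a2 a3 :
  0 <= phi < 1 -> 0 <= a2 < 1 ->
  conv (abinom (INR p + phi)) (conv (abinom (INR q + a2)) (abinom a3)) n <=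
  conv (abinom (INR q + (INR p + phi))) (conv (abinom a2) (abinom a3)) n
  + 2 * 2 ^ q / (INR p + 2) * INR (n - S p) * sumto n (abinom a3).
Proof.
  intros Hphi Ha2; pose proof (pos_INR p) as Hp.
  set (y := INR p + phi); set (B := gbinom (INR q)); set (G := conv (abinom a2) (abinom a3)).
  set (K := 2 * 2 ^ q / (INR p + 2)).
  assert (HK : 0 <= K).
  { unfold K, Rdiv; pose proof (pow_le 2 q).
    apply Rmult_le_pos; [lra | left; apply Rinv_0_lt_compat; lra]. }
  assert (Hshift : conv (abinom y) (conv (abinom (INR q + a2)) (abinom a3)) n
                   <= conv (conv B (abinom y)) G n).
  { replace (conv (conv B (abinom y)) G n)
      with (conv (abinom y) (conv (conv B (abinom a2)) (abinom a3)) n).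
    - apply conv_le; intros i Hi; split; try apply abinom_nonneg; try lra.
      + apply conv_nonneg; intros; apply abinom_nonneg.
      + apply conv_le; intros j Hj; split; try apply abinom_nonneg; try lra.
        apply abinom_INR_add_le.
    - rewrite (conv_ext _ (abinom y) _ (conv B G)), conv_assoc
        by (intros; first [reflexivity | symmetry; apply conv_assoc]).
      apply conv_ext; intros; [apply conv_comm | reflexivity]. }
  assert (Hkey : conv (conv B (abinom y)) G n
                 <= conv (fun k => abinom (INR q + y) k + K * indic_ge (S (S p)) k) G n).
  { apply conv_le; intros i Hi; split; try apply conv_nonneg; try lra;
      try (intros; apply abinom_nonneg).
    - intros; apply gbinom_INR_nonneg.
    - exact (conv_gbinom_abinom_intpart_le q p phi i Hphi). }
  assert (Hrest : conv (fun k => K * indic_ge (S (S p)) k) G n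
                  <= K * INR (n - S p) * sumto n (abinom a3)).
  { eapply Rle_trans; [apply (conv_le_sum_mul _ _ (sumto n (abinom a3)))|].
    - intros; pose proof (indic_ge_bounds (S (S p)) i); apply Rmult_le_pos; lra.
    - intros; apply conv_abinom_le_sumto; assumption.
    - rewrite sumto_scal_l, sumto_indic_ge; apply Req_le; reflexivity. }
  rewrite conv_plus_l in Hkey; lra.
Qed.

Lemma sqr_add_le_pow2 q : INR q ^ 2 + INR q + 2 <= 4 * 2 ^ q.
Proof.
  induction q as [|q IH]; [simpl; lra|].
  rewrite S_INR; simpl pow in *.
  destruct q as [|q]; [simpl; lra|].
  assert (1 <= INR (S q)) by (rewrite S_INR; pose proof (pos_INR q); lra); nra.
Qed.

Lemma error_term_le q p c W L :
  0 <= W <= 2 + L -> 0 <= L -> (c * (q + 2) <= (q + 1) * (p + 2))%nat ->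
  2 * 2 ^ q / (INR p + 2) * INR c * W <= 2 ^ (q + 2) + 1 - INR q + 2 ^ (q + 1) * L.
Proof.
  intros HW HL Hc; rewrite !pow_add; simpl pow.
  apply le_INR in Hc; rewrite !mult_INR, !plus_INR in Hc; simpl INR in Hc.
  pose proof (pos_INR p); pose proof (pos_INR q); pose proof (pos_INR c).
  pose proof (sqr_add_le_pow2 q); pose proof (pow_le 2 q ltac:(lra)).
  set (X := INR c / (INR p + 2)).
  assert (HX0 : 0 <= X) by (unfold X, Rdiv; apply Rmult_le_pos; [lra | left; apply Rinv_0_lt_compat; lra]).
  assert (HX : X * (INR q + 2) <= INR q + 1).
  { unfold X; apply Rmult_le_reg_r with (INR p + 2); [lra|].
    replace (INR c / (INR p + 2) * (INR q + 2) * (INR p + 2)) with (INR c * (INR q + 2)) by (field; lra).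
    lra. }
  replace (2 * 2 ^ q / (INR p + 2) * INR c * W) with (2 * 2 ^ q * X * W) by (unfold X; field; lra).
  set (P := 2 ^ q) in *.
  assert (X <= 1) by nra.
  assert (P * X * W <= P * X * (2 + L)) by (apply Rmult_le_compat_l; nra).
  assert (P * X * L <= P * L) by (apply Rmult_le_compat_r; nra).
  nra.
Qed.

Lemma conv3_abinom_transfer_bound n q p phi a2 a3 :
  (1 <= n)%nat -> 0 <= phi < 1 -> 0 <= a2 < 1 -> 0 <= a3 < 1 ->
  ((n - S p) * (q + 2) <= (q + 1) * (p + 2))%nat ->
  conv (abinom (INR p + phi)) (conv (abinom (INR q + a2)) (abinom a3)) n <=
  conv (abinom (INR q + (INR p + phi))) (conv (abinom a2) (abinom a3)) n
  + 2 ^ (q + 2) + 1 - INR q + 2 ^ (q + 1) * ln (INR n).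
Proof.
  intros Hn Hphi Ha2 Ha3 Hc.
  assert (HL : 0 <= ln (INR n)).
  { destruct (Nat.eq_dec n 1) as [->|]; [simpl; rewrite ln_1; lra|].
    rewrite <- ln_1; left; apply ln_increasing; [lra | apply (lt_INR 1); lia]. }
  pose proof (conv3_abinom_transfer_le n q p phi a2 a3 Hphi Ha2).
  pose proof (error_term_le q p (n - S p) (sumto n (abinom a3)) (ln (INR n))).
  pose proof (sumto_abinom_le_ln a3 n Ha3 Hn).
  assert (0 <= sumto n (abinom a3)) by (apply sumto_nonneg; intros; apply abinom_nonneg).
  intuition lra.
Qed.

Lemma lebesgue_conv n l1 l2 l3 :
  lebesgue n l1 l2 l3 =
  conv (abinom (INR n * l1)) (conv (abinom (INR n * l2)) (abinom (INR n * l3))) n.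
Proof.
  apply sumto_ext; intros i Hi; unfold conv; rewrite <- sumto_scal_l.
  apply sumto_ext; intros j Hj.
  unfold lagr, lfac, abinom, gbinom; rewrite !Rabs_mult; ring.
Qed.

Lemma frakL_conv n r1 r2 r3 a1 a2 a3 :
  (n <> 0)%nat ->
  frakL n r1 r2 r3 a1 a2 a3 =
  conv (abinom (INR r1 + a1)) (conv (abinom (INR r2 + a2)) (abinom (INR r3 + a3))) n.
Proof.
  intros Hn; apply not_0_INR in Hn.
  unfold frakL; rewrite lebesgue_conv.
  replace (INR n * ((INR r1 + a1) / INR n)) with (INR r1 + a1) by (field; assumption).
  replace (INR n * ((INR r2 + a2) / INR n)) with (INR r2 + a2) by (field; assumption).
  replace (INR n * ((INR r3 + a3) / INR n)) with (INR r3 + a3) by (field; assumption).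
  reflexivity.
Qed.

Theorem lemma16 (n r1 r2 : nat) (a1 a2 a3 : R) :
  (4 <= n)%nat ->
  (r1 + r2 = n - 1)%nat ->
  -1 < a1 < 1 ->
  0 <= a2 < 1 ->
  0 <= a3 < 1 ->
  a1 + a2 + a3 = 1 ->
  INR r1 + a1 >= INR r2 + a2 ->
  frakL n r1 r2 0 a1 a2 a3 <=
    frakL n (r1 + r2) 0 0 a1 a2 a3 + 2 ^ (r2 + 2) + 1 - INR r2
    + 2 ^ (r2 + 1) * ln (INR n).
Proof.
  intros Hn Hr Ha1 Ha2 Ha3 _ Hge.
  rewrite !frakL_conv by lia; simpl (INR 0); rewrite !Rplus_0_l.
  replace (INR (r1 + r2) + a1) with (INR r2 + (INR r1 + a1)) by (rewrite plus_INR; ring).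
  (* Integer and fractional part of [y = r1 + a1]: [(r1, a1)] or [(r1 - 1, 1 + a1)]. *)
  destruct (Rle_lt_dec 0 a1) as [Ha1p | Ha1n].
  - assert (r2 < S r1)%nat by (apply INR_lt; rewrite S_INR; lra).
    apply conv3_abinom_transfer_bound; [lia | lra | assumption | assumption | nia].
  - destruct r1 as [|p]; [simpl in Hge; pose proof (pos_INR r2); lra|].
    assert (r2 < S p)%nat by (apply INR_lt; lra).
    replace (INR (S p) + a1) with (INR p + (1 + a1)) by (rewrite S_INR; ring).
    apply conv3_abinom_transfer_bound; [lia | lra | assumption | assumption | nia].
Qed.
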